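(* If $\Gamma$ is a symmetric bimatrix game with $m=2$ strategies per player, then $\mathrm{conv}(\mathrm{Nash}_{\mathrm{sym}}(\Gamma))=\mathrm{XE}_{\mathrm{sym}}(\Gamma)$.
   Context: A symmetric bimatrix game: two players with the same finite strategy set $C_1$ and utilities with $u_1(s_1,s_2)=u_2(s_2,s_1)$. Distributions on $C_1\times C_1$ are identified with nonnegative matrices summing to one. A correlated equilibrium is a distribution $\pi$ with $\sum_{s_{-i}}[u_i(t_i,s_{-i})-u_i(s)]\pi(s)\le0$ for each player $i$ and all $s_i,t_i$. $\mathrm{Nash}_{\mathrm{sym}}(\Gamma)$ is the set of symmetric Nash equilibria, viewed as matrices $xx^T$ ($x$ a probability vector) that are correlated equilibria. $\mathrm{XE}_{\mathrm{sym}}(\Gamma)$ (exchangeable equilibria) is the set of correlated equilibria lying in $\mathrm{conv}\{xx^T:x\text{ a probability vector on }C_1\}$. *)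

From mathcomp Require Import all_boot all_order all_algebra.
Set Implicit Arguments. Unset Strict Implicit. Unset Printing Implicit Defensive.
Import Order.TTheory GRing.Theory Num.Theory.
Local Open Scope ring_scope.

(* A symmetric bimatrix game on strategy set 'I_m is given by the payoff
   u : 'I_m -> 'I_m -> R of player 1; player 2's payoff is
   u2 s1 s2 := u s2 s1 (so u1(s1,s2) = u2(s2,s1)). *)
Definition u1 (R : numDomainType) (m : nat) (u : 'I_m -> 'I_m -> R) (s1 s2 : 'I_m) : R := u s1 s2.
Definition u2 (R : numDomainType) (m : nat) (u : 'I_m -> 'I_m -> R) (s1 s2 : 'I_m) : R := u s2 s1.

Definition is_distr (R : numDomainType) (m : nat) (pi : 'M[R]_m) : Prop :=
  (forall i j, 0 <= pi i j) /\ \sum_i \sum_j pi i j = 1.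

Definition is_prob_vec (R : numDomainType) (m : nat) (x : 'cV[R]_m) : Prop :=
  (forall i, 0 <= x i 0) /\ \sum_i x i 0 = 1.

Definition correlated_eq (R : numDomainType) (m : nat) (u : 'I_m -> 'I_m -> R)
    (pi : 'M[R]_m) : Prop :=
  is_distr pi /\
  (forall s t : 'I_m, \sum_(s2 : 'I_m) (u1 u t s2 - u1 u s s2) * pi s s2 <= 0) /\
  (forall s t : 'I_m, \sum_(s1 : 'I_m) (u2 u s1 t - u2 u s1 s) * pi s1 s <= 0).

Definition outer (R : numDomainType) (m : nat) (x : 'cV[R]_m) : 'M[R]_m := x *m x^T.

Definition Nash_sym (R : numDomainType) (m : nat) (u : 'I_m -> 'I_m -> R)
    (pi : 'M[R]_m) : Prop :=
  exists x : 'cV[R]_m, is_prob_vec x /\ pi = outer x /\ correlated_eq u pi.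

Definition conv (R : numDomainType) (m : nat) (S : 'M[R]_m -> Prop) (pi : 'M[R]_m) : Prop :=
  exists (k : nat) (lam : 'I_k -> R) (P : 'I_k -> 'M[R]_m),
    (forall l, 0 <= lam l) /\ \sum_l lam l = 1 /\ (forall l, S (P l)) /\
    pi = \sum_l lam l *: P l.

Definition XE_sym (R : numDomainType) (m : nat) (u : 'I_m -> 'I_m -> R)
    (pi : 'M[R]_m) : Prop :=
  correlated_eq u pi /\
  conv (fun M => exists x : 'cV[R]_m, is_prob_vec x /\ M = outer x) pi.

From mathcomp Require Import all_boot all_order all_algebra.
From mathcomp Require Import reals ring lra.
Import Order.TTheory GRing.Theory Num.Theory.
Set Implicit Arguments. Unset Strict Implicit. Unset Printing Implicit Defensive.
Local Open Scope ring_scope.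

(* Correlated equilibria form a convex set and symmetric Nash equilibria are
   products x x^T, so conv(Nash) is contained in XE in any dimension.
   Conversely, let d_s be the gain of switching from strategy 0 to 1 against s.
   A symmetric distribution [[a, b], [b, c]] is a correlated equilibrium iff
   d0 a + d1 b <= 0 <= d0 b + d1 c, and lying in conv{x x^T} forces
   b^2 <= a c (Jensen's inequality for the marginal a + b).  If d0 > 0 or
   d1 < 0, the equilibrium inequalities give a c <= b^2, so the distribution is
   the product of its marginals and is itself a symmetric Nash equilibrium.
   If d0 < 0 < d1 it is a mixture of the two pure equilibria and the mixed one;
   if exactly one d_s vanishes then b = 0 and the pure equilibria suffice; if
   both vanish every x x^T is a Nash equilibrium. *)

Section ConvexHull.
Variables (R : numDomainType) (m : nat).
Implicit Types (S T : 'M[R]_m -> Prop) (P : 'M[R]_m).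

Lemma conv_mono S T P : (forall M, S M -> T M) -> conv S P -> conv T P.
Proof.
move=> ST [k [lam [Q [lam_ge0 [lam_sum [QS ->]]]]]].
by exists k, lam, Q; do 2!split=> //; split=> // l; apply: ST.
Qed.

Lemma conv_self S P : S P -> conv S P.
Proof.
move=> SP; exists 1, (fun=> 1), (fun=> P).
by rewrite !big_ord1 scale1r; split=> [l|]; last split.
Qed.

Lemma conv3 S P1 P2 P3 al be ga :
  S P1 -> S P2 -> S P3 -> 0 <= al -> 0 <= be -> 0 <= ga -> al + be + ga = 1 ->
  conv S (al *: P1 + be *: P2 + ga *: P3).
Proof.
move=> S1 S2 S3 al0 be0 ga0 sum1.
exists 3, (fun l => nth ga [:: al; be] l), (fun l => nth P3 [:: P1; P2] l).
rewrite !big_ord_recl !big_ord0 /= !addr0 !addrA.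
by split=> [[[|[|[|n]]] ?] //|]; split=> //; split=> // [[[|[|[|n]]] ?]].
Qed.

Lemma summx_scaleE k (lam : 'I_k -> R) (Q : 'I_k -> 'M[R]_m) i j :
  (\sum_l lam l *: Q l) i j = \sum_l lam l * Q l i j.
Proof. by rewrite summxE; apply: eq_bigr => l _; rewrite mxE. Qed.

End ConvexHull.

Section CorrelatedEquilibria.
Variables (R : numDomainType) (m : nat).
Implicit Types (P : 'M[R]_m) (x : 'cV[R]_m).

Lemma sum_mul_summx_scale (I : finType) (c : I -> R) (f g : I -> 'I_m)
    k (lam : 'I_k -> R) (Q : 'I_k -> 'M[R]_m) :
  \sum_i c i * (\sum_l lam l *: Q l) (f i) (g i)
  = \sum_l lam l * \sum_i c i * Q l (f i) (g i).
Proof.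
under eq_bigr do rewrite summx_scaleE mulr_sumr.
rewrite exchange_big; apply: eq_bigr => l _; rewrite mulr_sumr.
by apply: eq_bigr => i _; rewrite mulrCA.
Qed.

Lemma total_massE P : \sum_i \sum_j P i j = \sum_(p : 'I_m * 'I_m) 1 * P p.1 p.2.
Proof. by rewrite pair_big; apply: eq_bigr => p _; rewrite mul1r. Qed.

Lemma is_distr_conv P : conv (@is_distr R m) P -> is_distr P.
Proof.
case=> k [lam [Q [lam_ge0 [lam_sum1 [Qdistr ->]]]]]; split.
  move=> i j; rewrite summx_scaleE; apply: sumr_ge0 => l _.
  by rewrite mulr_ge0 //; case: (Qdistr l).
rewrite total_massE sum_mul_summx_scale -[RHS]lam_sum1.
by apply: eq_bigr => l _; rewrite -total_massE; case: (Qdistr l) => _ ->; rewrite mulr1.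
Qed.

Lemma correlated_eq_conv (u : 'I_m -> 'I_m -> R) P :
  conv (correlated_eq u) P -> correlated_eq u P.
Proof.
move=> PCE; split.
  by apply: is_distr_conv; apply: conv_mono PCE => M [].
case: PCE => k [lam [Q [lam_ge0 [_ [QCE ->]]]]]; split=> s t.
- rewrite (sum_mul_summx_scale _ (fun=> s) id); apply: sumr_le0 => l _.
  by rewrite mulr_ge0_le0 //; case: (QCE l) => _ [].
- rewrite (sum_mul_summx_scale _ id (fun=> s)); apply: sumr_le0 => l _.
  by rewrite mulr_ge0_le0 //; case: (QCE l) => _ [].
Qed.

Lemma outerE x i j : outer x i j = x i 0 * x j 0.
Proof. by rewrite /outer !mxE big_ord1 mxE. Qed.

Lemma outer_is_distr x : is_prob_vec x -> is_distr (outer x).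
Proof.
case=> x_ge0 x_sum1; split=> [i j|]; first by rewrite outerE mulr_ge0.
under eq_bigr do under eq_bigr do rewrite outerE.
by rewrite -(mulr1 1) -{1}x_sum1 mulr_suml; apply: eq_bigr => i _; rewrite -x_sum1 mulr_sumr.
Qed.

End CorrelatedEquilibria.

Definition sym_product (R : numDomainType) (m : nat) (M : 'M[R]_m) : Prop :=
  exists x : 'cV[R]_m, is_prob_vec x /\ M = outer x.

Lemma Nash_sym_product (R : numDomainType) m (u : 'I_m -> 'I_m -> R) M :
  Nash_sym u M -> sym_product M.
Proof. by case=> x [x_prob [-> _]]; exists x. Qed.

Lemma conv_sym_product_distr (R : numDomainType) m (P : 'M[R]_m) :
  conv (@sym_product R m) P -> is_distr P.
Proof.
by move=> Pconv; apply: is_distr_conv; apply: conv_mono Pconv => _ [x [/outer_is_distr ? ->]].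
Qed.

Lemma conv_sym_product_sym (R : numDomainType) m (P : 'M[R]_m) i j :
  conv (@sym_product R m) P -> P i j = P j i.
Proof.
case=> k [lam [Q [_ [_ [Qprod ->]]]]]; rewrite !summx_scaleE.
by apply: eq_bigr => l _; have [x [_ ->]] := Qprod l; rewrite !outerE [x i 0 * _]mulrC.
Qed.

Lemma conv_Nash_XE_sym (R : numDomainType) m (u : 'I_m -> 'I_m -> R) P :
  conv (Nash_sym u) P -> XE_sym u P.
Proof.
move=> PNash; split; last by apply: conv_mono PNash => M; apply: Nash_sym_product.
by apply: correlated_eq_conv; apply: conv_mono PNash => M [x [_ []]].
Qed.

Lemma sqr_mean_le (R : realDomainType) (I : finType) (lam f : I -> R) :
  (forall i, 0 <= lam i) -> \sum_i lam i = 1 ->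
  (\sum_i lam i * f i) ^+ 2 <= \sum_i lam i * f i ^+ 2.
Proof.
move=> lam_ge0 lam_sum1; set t := \sum_i lam i * f i.
have : 0 <= \sum_i lam i * (f i - t) ^+ 2.
  by apply: sumr_ge0 => i _; rewrite mulr_ge0 ?sqr_ge0.
have -> : \sum_i lam i * (f i - t) ^+ 2
          = \sum_i lam i * f i ^+ 2 - t *+ 2 * t + t ^+ 2 * \sum_i lam i.
  rewrite mulr_sumr mulr_sumr -sumrB -big_split /=.
  by apply: eq_bigr => i _; ring.
rewrite lam_sum1; lra.
Qed.

Notation i0 := (@ord0 1).
Notation i1 := (@ord_max 1).

Lemma ord2P (i : 'I_2) : i = i0 \/ i = i1.
Proof. by case: i => [[|[|//]] ?]; [left|right]; apply: val_inj. Qed.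

Lemma sum_ord2 (V : nmodType) (F : 'I_2 -> V) : \sum_i F i = F i0 + F i1.
Proof. by rewrite big_ord_recr big_ord1; congr (F _ + F _); apply: val_inj. Qed.

Definition vec2 (R : pzRingType) (p q : R) : 'cV[R]_2 :=
  \col_i (if i == i0 then p else q).

Lemma outer_vec2E (R : numDomainType) (p q : R) i j :
  outer (vec2 p q) i j = (if i == i0 then p else q) * (if j == i0 then p else q).
Proof. by rewrite outerE !mxE. Qed.

Lemma vec2_prob (R : numDomainType) (p q : R) :
  0 <= p -> 0 <= q -> p + q = 1 -> is_prob_vec (vec2 p q).
Proof.
move=> p_ge0 q_ge0 pq1; split; last by rewrite sum_ord2 !mxE.
by move=> i; rewrite mxE; case: ifP.
Qed.

Lemma conv3_outer_vec2 (R : numDomainType) (T : 'M[R]_2 -> Prop) (P : 'M[R]_2)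
    (p1 q1 p2 q2 p3 q3 al be ga : R) :
  T (outer (vec2 p1 q1)) -> T (outer (vec2 p2 q2)) -> T (outer (vec2 p3 q3)) ->
  0 <= al -> 0 <= be -> 0 <= ga -> al + be + ga = 1 ->
  P i0 i0 = al * (p1 * p1) + be * (p2 * p2) + ga * (p3 * p3) ->
  P i0 i1 = al * (p1 * q1) + be * (p2 * q2) + ga * (p3 * q3) ->
  P i1 i0 = P i0 i1 ->
  P i1 i1 = al * (q1 * q1) + be * (q2 * q2) + ga * (q3 * q3) ->
  conv T P.
Proof.
move=> T1 T2 T3 al0 be0 ga0 sum1 E00 E01 E10 E11.
suff -> : P = al *: outer (vec2 p1 q1) + be *: outer (vec2 p2 q2) + ga *: outer (vec2 p3 q3).
  exact: conv3.
apply/matrixP => i j; rewrite !mxE !big_ord1 !mxE.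
by case: (ord2P i) => ->; case: (ord2P j) => -> /=; rewrite ?E10 ?E00 ?E01 ?E11 //; ring.
Qed.

Lemma sym_product2_marginal (R : numDomainType) (Q : 'M[R]_2) :
  sym_product Q -> (Q i0 i0 + Q i0 i1) ^+ 2 = Q i0 i0.
Proof.
case=> x [[_ x_sum1] ->]; rewrite sum_ord2 in x_sum1; rewrite !outerE.
by rewrite -mulrDr x_sum1 mulr1 expr2.
Qed.

Lemma conv_sym_product2_det (R : realFieldType) (P : 'M[R]_2) :
  conv (@sym_product R 2) P -> P i0 i1 ^+ 2 <= P i0 i0 * P i1 i1.
Proof.
move=> Pconv; have [_ P_sum1] := conv_sym_product_distr Pconv.
have P_sym := conv_sym_product_sym i0 i1 Pconv.
rewrite !sum_ord2 in P_sum1.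
suff : (P i0 i0 + P i0 i1) ^+ 2 <= P i0 i0 by nra.
case: Pconv => k [lam [Q [lam_ge0 [lam_sum1 [Qprod ->]]]]].
rewrite !summx_scaleE -big_split /=.
under [X in _ <= X]eq_bigr => l _ do rewrite -(sym_product2_marginal (Qprod l)).
under eq_bigr do rewrite -mulrDr.
exact: sqr_mean_le.
Qed.

Lemma sym_product2_rank1 (R : realFieldType) (P : 'M[R]_2) :
  is_distr P -> P i0 i1 = P i1 i0 -> P i0 i0 * P i1 i1 = P i0 i1 ^+ 2 ->
  P = outer (vec2 (P i0 i0 + P i0 i1) (P i0 i1 + P i1 i1)).
Proof.
move=> [P_ge0 P_sum1] P_sym P_det; rewrite !sum_ord2 in P_sum1.
apply/matrixP => i j; rewrite outer_vec2E.
by case: (ord2P i) => ->; case: (ord2P j) => -> /=; rewrite -?P_sym; nra.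
Qed.

Definition deviation_gain (R : numDomainType) (u : 'I_2 -> 'I_2 -> R) (s : 'I_2) : R :=
  u i1 s - u i0 s.

Section SymmetricTwoByTwo.
Variables (R : realFieldType) (u : 'I_2 -> 'I_2 -> R).

Local Notation d0 := (deviation_gain u i0).
Local Notation d1 := (deviation_gain u i1).

Lemma correlated_eq2P (P : 'M[R]_2) : is_distr P -> P i0 i1 = P i1 i0 ->
  correlated_eq u P <->
  d0 * P i0 i0 + d1 * P i0 i1 <= 0 /\ 0 <= d0 * P i0 i1 + d1 * P i1 i1.
Proof.
move=> P_distr P_sym; split=> [[_ [CE1 _]] | [CE0 CE1]].
  have := CE1 i0 i1; have := CE1 i1 i0; rewrite !sum_ord2 /u1 -P_sym /deviation_gain; lra.
rewrite /deviation_gain in CE0 CE1; split=> //; split=> s t; rewrite sum_ord2 /u1 /u2.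
- by case: (ord2P s) => ->; case: (ord2P t) => ->; rewrite ?subrr ?mul0r ?addr0 //; nra.
- by case: (ord2P s) => ->; case: (ord2P t) => ->; rewrite ?subrr ?mul0r ?addr0 // -?P_sym; nra.
Qed.

Lemma Nash_sym_vec2 (p q : R) : 0 <= p -> 0 <= q -> p + q = 1 ->
  d0 * (p * p) + d1 * (p * q) <= 0 -> 0 <= d0 * (p * q) + d1 * (q * q) ->
  Nash_sym u (outer (vec2 p q)).
Proof.
move=> p_ge0 q_ge0 pq1 CE0 CE1; have x_prob := vec2_prob p_ge0 q_ge0 pq1.
exists (vec2 p q); do 2!split=> //.
apply/correlated_eq2P; rewrite ?outer_vec2E //=; first exact: outer_is_distr.
exact: mulrC.
Qed.

Lemma Nash_sym_indifferent (M : 'M[R]_2) :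
  d0 = 0 -> d1 = 0 -> sym_product M -> Nash_sym u M.
Proof.
move=> d0_0 d1_0 [x [x_prob ->]]; exists x; do 2!split=> //.
apply/correlated_eq2P; rewrite ?outerE ?d0_0 ?d1_0 ?mul0r ?addr0 //.
  exact: outer_is_distr.
exact: mulrC.
Qed.

Section Decomposition.
Variable P : 'M[R]_2.
Hypotheses (P_distr : is_distr P) (P_sym : P i0 i1 = P i1 i0).
Hypotheses (P_CE0 : d0 * P i0 i0 + d1 * P i0 i1 <= 0)
           (P_CE1 : 0 <= d0 * P i0 i1 + d1 * P i1 i1).

(* The mixed equilibrium (p, q) solves [d0 p + d1 q = 0]; its weight is fixed
   by the off-diagonal entry, and the two pure equilibria absorb the rest of
   the diagonal, which is nonnegative by [P_CE0] and [P_CE1]. *)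
Lemma conv_Nash_mixed : d0 < 0 -> 0 < d1 -> conv (Nash_sym u) P.
Proof.
move=> d0_lt0 d1_gt0; have [P_ge0 P_sum1] := P_distr.
rewrite !sum_ord2 -P_sym in P_sum1.
have d0_neq0 : d0 != 0 by rewrite ltr0_neq0.
have d1_neq0 : d1 != 0 by rewrite lt0r_neq0.
have dd_neq0 : d1 - d0 != 0 by rewrite lt0r_neq0 // subr_gt0 (lt_trans d0_lt0).
pose p := d1 / (d1 - d0); pose q := - d0 / (d1 - d0).
have pq1 : p + q = 1 by rewrite /p /q; field.
have indiff : d0 * p + d1 * q = 0 by rewrite /p /q; field.
have e0 : Nash_sym u (outer (vec2 1 0)) by apply: Nash_sym_vec2; rewrite ?mulr0 ?mul0r; lra.
have e1 : Nash_sym u (outer (vec2 0 1)) by apply: Nash_sym_vec2; rewrite ?mulr0 ?mul0r; lra.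
have e_mixed : Nash_sym u (outer (vec2 p q)).
  apply: Nash_sym_vec2; rewrite ?divr_ge0 //; try lra.
    have -> : d0 * (p * p) + d1 * (p * q) = p * (d0 * p + d1 * q) by ring.
    by rewrite indiff mulr0.
  have -> : d0 * (p * q) + d1 * (q * q) = q * (d0 * p + d1 * q) by ring.
  by rewrite indiff mulr0.
apply: (conv3_outer_vec2 e0 e1 e_mixed
  (al := - (d0 * P i0 i0 + d1 * P i0 i1) / - d0)
  (be := (d0 * P i0 i1 + d1 * P i1 i1) / d1)
  (ga := P i0 i1 * (d1 - d0) ^+ 2 / (- d0 * d1))).
- by apply: divr_ge0; rewrite oppr_ge0 // ltW.
- by apply: divr_ge0 => //; rewrite ltW.
- by apply: divr_ge0; apply: mulr_ge0; rewrite ?P_ge0 ?sqr_ge0 ?oppr_ge0 ?ltW.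
- by rewrite -[1]P_sum1; field; rewrite d0_neq0 d1_neq0.
- by rewrite /p /q; field; rewrite dd_neq0 d0_neq0 d1_neq0.
- by rewrite /p /q; field; rewrite dd_neq0 d0_neq0 d1_neq0.
- by rewrite P_sym.
- by rewrite /p /q; field; rewrite dd_neq0 d0_neq0 d1_neq0.
Qed.

Lemma conv_Nash_pure : d0 <= 0 -> 0 <= d1 -> P i0 i1 = 0 -> conv (Nash_sym u) P.
Proof.
move=> d0_le0 d1_ge0 b0; have [P_ge0 P_sum1] := P_distr.
rewrite !sum_ord2 -P_sym b0 in P_sum1.
have e0 : Nash_sym u (outer (vec2 1 0)) by apply: Nash_sym_vec2; rewrite ?mulr0 ?mul0r; lra.
have e1 : Nash_sym u (outer (vec2 0 1)) by apply: Nash_sym_vec2; rewrite ?mulr0 ?mul0r; lra.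
apply: (conv3_outer_vec2 (al := P i0 i0) (be := P i1 i1) (ga := 0) e0 e1 e0);
  rewrite -?P_sym ?b0 ?P_ge0 //; lra.
Qed.

Lemma Nash_sym_rank1 : P i0 i1 ^+ 2 <= P i0 i0 * P i1 i1 ->
  0 < d0 \/ d1 < 0 -> Nash_sym u P.
Proof.
move=> P_det d_sign; have [P_ge0 P_sum1] := P_distr.
have a_ge0 := P_ge0 i0 i0; have b_ge0 := P_ge0 i0 i1; have c_ge0 := P_ge0 i1 i1.
rewrite !sum_ord2 -P_sym in P_sum1.
have P_det_ge : P i0 i0 * P i1 i1 <= P i0 i1 ^+ 2.
  case: d_sign => [d0_gt0 | d1_lt0].
    rewrite -(ler_pM2l d0_gt0).
    have := mulr_le0_ge0 P_CE0 c_ge0; have := mulr_ge0 P_CE1 b_ge0; nra.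
  rewrite -(ler_nM2l d1_lt0).
  have := mulr_le0_ge0 P_CE0 b_ge0; have := mulr_ge0 P_CE1 a_ge0; nra.
have P_det_eq : P i0 i0 * P i1 i1 = P i0 i1 ^+ 2.
  by apply/le_anti; rewrite P_det_ge P_det.
have P_rank1 := sym_product2_rank1 P_distr P_sym P_det_eq.
exists (vec2 (P i0 i0 + P i0 i1) (P i0 i1 + P i1 i1)).
split; first by apply: vec2_prob; lra.
by split=> //; apply/correlated_eq2P.
Qed.

End Decomposition.

Lemma XE_sym2_conv_Nash (P : 'M[R]_2) : XE_sym u P -> conv (Nash_sym u) P.
Proof.
case=> P_CE P_conv.
have P_distr := conv_sym_product_distr P_conv.
have P_sym := conv_sym_product_sym i0 i1 P_conv.
have [CE0 CE1] := (correlated_eq2P P_distr P_sym).1 P_CE.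
have P_det := conv_sym_product2_det P_conv.
have b_ge0 := P_distr.1 i0 i1.
have [d0_gt0 | d0_le0] := ltrP 0 d0.
  by apply/conv_self/Nash_sym_rank1 => //; left.
have [d1_lt0 | d1_ge0] := ltrP d1 0.
  by apply/conv_self/Nash_sym_rank1 => //; right.
have [d0_lt0 | d0_ge0] := ltrP d0 0; have [d1_gt0 | d1_le0] := ltrP 0 d1.
- exact: conv_Nash_mixed.
- have d1_0 : d1 = 0 by lra.
  rewrite d1_0 mul0r addr0 in CE1.
  by apply: conv_Nash_pure => //; nra.
- have d0_0 : d0 = 0 by lra.
  rewrite d0_0 mul0r add0r in CE0.
  by apply: conv_Nash_pure => //; nra.
- apply: conv_mono P_conv => M; apply: Nash_sym_indifferent; lra.
Qed.

End SymmetricTwoByTwo.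

Theorem theorem3p6 (R : realType) (u : 'I_2 -> 'I_2 -> R) (pi : 'M[R]_2) :
  conv (Nash_sym u) pi <-> XE_sym u pi.
Proof. by split; [apply: conv_Nash_XE_sym | apply: XE_sym2_conv_Nash]. Qed.
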